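(* Let $S$ be a semiring and $P$ a left $S$-semimodule. If $0\to K\xrightarrow{\iota}L\xrightarrow{\pi}M\to0$ is a short exact sequence of left $S$-semimodules and $P$ is $L$-$e$-projective, then $P$ is $K$-$e$-projective and $M$-$e$-projective.
   Context: A semiring $(S,+,0,\cdot,1)$ consists of a commutative monoid $(S,+,0)$ and a monoid $(S,\cdot,1)$ with $0\neq 1$, absorbing zero and both distributive laws; left $S$-semimodules and $S$-linear maps are as for modules without subtraction. For an $S$-linear $h:X\to Y$, $\mathrm{Ker}(h)=\{x\mid h(x)=0\}$; $h$ is $k$-normal if $h(x)=h(x')$ implies $x+k=x'+k'$ for some $k,k'\in\mathrm{Ker}(h)$. A short exact sequence $0\to A\xrightarrow{f}B\xrightarrow{g}C\to0$ (of semimodules or commutative monoids) means: $f$ injective, $f(A)=\mathrm{Ker}(g)$, $g$ surjective and $k$-normal. For a left $S$-semimodule $X$, $P$ is $X$-$e$-projective if for every short exact sequence $0\to A\xrightarrow{f}X\xrightarrow{g}C\to0$ of left $S$-semimodules with middle term $X$, the sequence $0\to\mathrm{Hom}_S(P,A)\xrightarrow{f\circ-}\mathrm{Hom}_S(P,X)\xrightarrow{g\circ-}\mathrm{Hom}_S(P,C)\to0$ is a short exact sequence of commutative monoids (Hom-sets with pointwise addition). *)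

From HB Require Import structures.
From mathcomp Require Import all_boot all_order all_algebra.
Set Implicit Arguments. Unset Strict Implicit. Unset Printing Implicit Defensive.
Import GRing.Theory.
Local Open Scope ring_scope.

Definition k_normal (X Y : nmodType) (h : X -> Y) : Prop :=
  forall x x', h x = h x' ->
    exists k k', h k = 0 /\ h k' = 0 /\ x + k = x' + k'.

Definition ses_semimod (S : nzSemiRingType) (A B C : lSemiModType S)
  (f : {linear A -> B}) (g : {linear B -> C}) : Prop :=
  injective f /\
  (forall b : B, g b = 0 <-> exists a : A, f a = b) /\
  (forall c : C, exists b : B, g b = c) /\
  k_normal g.

(* The induced sequence of commutative monoids
   0 -> Hom_S(P,A) -(f o -)-> Hom_S(P,B) -(g o -)-> Hom_S(P,C) -> 0
   (addition and zero of Hom-sets are pointwise, equality of S-linear maps is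
   pointwise equality) is a short exact sequence of commutative monoids. *)
Definition ses_hom (S : nzSemiRingType) (P A B C : lSemiModType S)
  (f : {linear A -> B}) (g : {linear B -> C}) : Prop :=
  (forall a1 a2 : {linear P -> A},
      (forall p, f (a1 p) = f (a2 p)) -> forall p, a1 p = a2 p) /\
  (forall b : {linear P -> B},
      (forall p, g (b p) = 0) <->
      exists a : {linear P -> A}, forall p, f (a p) = b p) /\
  (forall c : {linear P -> C},
      exists b : {linear P -> B}, forall p, g (b p) = c p) /\
  (forall b b' : {linear P -> B},
      (forall p, g (b p) = g (b' p)) ->
      exists k k' : {linear P -> B},
        (forall p, g (k p) = 0) /\ (forall p, g (k' p) = 0) /\
        (forall p, b p + k p = b' p + k' p)).

Definition e_projective (S : nzSemiRingType) (X P : lSemiModType S) : Prop :=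
  forall (A C : lSemiModType S) (f : {linear A -> X}) (g : {linear X -> C}),
    ses_semimod f g -> ses_hom P f g.

From HB Require Import structures.
From mathcomp Require Import all_boot all_order all_algebra.
From mathcomp Require Import boolp.
Set Implicit Arguments.
Unset Strict Implicit.
Unset Printing Implicit Defensive.
Import GRing.Theory.
Local Open Scope ring_scope.
Local Open Scope quotient_scope.

(* If 0 -> A -> M -g-> C -> 0 is short exact, the composite g o pi : L -> C is
   still surjective and k-normal, so together with its kernel it ends a short
   exact sequence with middle term L; lifts and k-normality witnesses for P
   obtained in L are pushed down to M along pi.
   If 0 -> A -f-> K -g-> C -> 0 is short exact, the image of iota o f is
   subtractive in L, so L modulo its Bourne congruence (x ~ y iff
   x + iota (f a) = y + iota (f a')) is the end Q of a short exact sequence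
   0 -> A -> L -> Q -> 0, and k |-> [iota k] induces an embedding C -> Q.  A
   map P -> C lifts to a map P -> L that pi kills, hence to a map P -> K; the
   k-normality witnesses in L for L -> Q lie in the image of A and pull back
   to K because iota is injective. *)

Section LinearFactor.
Variables (S : nzSemiRingType) (X Y Z : lSemiModType S).

Lemma linear_factor_inj (f : {linear Y -> Z}) (h : {linear X -> Z}) :
  injective f -> (forall x, exists y, f y = h x) ->
  exists a : {linear X -> Y}, forall x, f (a x) = h x.
Proof.
move=> f_inj h_im.
have pre_ex x : exists y, f y == h x.
  by have [y fy] := h_im x; exists y; apply/eqP.
pose a x := xchoose (pre_ex x).
have fa x : f (a x) = h x by apply/eqP/(xchooseP (pre_ex x)).
have a_lin : semilinear_for *:%R a.
  by split=> [c x | x x']; apply: f_inj; rewrite ?linearZ_LR ?linearD !fa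
     ?linearZ_LR ?linearD.
by exists (HB.pack_for {linear X -> Y} a
  (GRing.isSemilinear.Build S X Y *:%R a a_lin)).
Qed.

Lemma linear_factor_surj (g : {linear X -> Y}) (h : {linear X -> Z}) :
  (forall y, exists x, g x = y) -> (forall x x', g x = g x' -> h x = h x') ->
  exists j : {linear Y -> Z}, forall x, j (g x) = h x.
Proof.
move=> g_onto h_fib.
have sec_ex y : exists x, g x == y by have [x <-] := g_onto y; exists x.
pose s y := xchoose (sec_ex y).
have gs y : g (s y) = y by apply/eqP/(xchooseP (sec_ex y)).
have hs_lin : semilinear_for *:%R (h \o s).
  split=> [c y | y y'] /=.
    by rewrite -linearZ_LR; apply: h_fib; rewrite linearZ_LR !gs.
  by rewrite -linearD; apply: h_fib; rewrite linearD !gs.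
exists (HB.pack_for {linear Y -> Z} (h \o s)
  (GRing.isSemilinear.Build S Y Z *:%R (h \o s) hs_lin)).
by move=> x; apply: h_fib; rewrite gs.
Qed.

End LinearFactor.

Lemma k_normal_comp (X Y Z : nmodType) (f : {additive X -> Y})
    (g : {additive Y -> Z}) :
  (forall y, exists x, f x = y) -> k_normal f -> k_normal g ->
  k_normal (g \o f).
Proof.
move=> f_onto f_kn g_kn x x' /g_kn [k [k' [gk [gk' ekk]]]].
have [[l fl] [l' fl']] := (f_onto k, f_onto k').
have /f_kn [u [u' [fu [fu' euu]]]] : f (x + l) = f (x' + l').
  by rewrite !raddfD fl fl' ekk.
exists (l + u), (l' + u').
by rewrite /= !raddfD fl fl' fu fu' raddf0 !addr0 gk gk' !addrA euu.
Qed.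

Section Kernel.
Variables (S : nzSemiRingType) (X Y : lSemiModType S) (h : {linear X -> Y}).

Definition ker_pred : pred X := [pred x | h x == 0].

Lemma ker_pred_closed : subsemimod_closed ker_pred.
Proof.
split; first split.
- by rewrite inE linear0.
- by move=> x y; rewrite !inE linearD => /eqP -> /eqP ->; rewrite addr0.
- by move=> a x; rewrite !inE linearZ_LR => /eqP ->; rewrite scaler0.
Qed.

HB.instance Definition _ :=
  GRing.isSubSemiModClosed.Build S X ker_pred ker_pred_closed.

Record ker_semimod := KerSemimod { ker_val : X; _ : ker_pred ker_val }.
HB.instance Definition _ := [isSub for ker_val].
HB.instance Definition _ := [Choice of ker_semimod by <:].
HB.instance Definition _ := [SubChoice_isSubLSemiModule of ker_semimod by <:].

Definition ker_incl : {linear ker_semimod -> X} := val.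

Lemma ker_incl_ses :
  (forall y, exists x, h x = y) -> k_normal h -> ses_semimod ker_incl h.
Proof.
move=> h_onto h_kn; split; first exact: val_inj.
split=> // x; split; last by case=> -[y hy] <-; apply/eqP.
by move/eqP=> hx; exists (KerSemimod hx).
Qed.

End Kernel.

Section ImageQuotient.
Variables (S : nzSemiRingType) (A X : lSemiModType S) (F : {linear A -> X}).

Definition im_congr (x y : X) : Prop := exists a a', x + F a = y + F a'.

Lemma im_congr_refl x : im_congr x x.
Proof. by exists 0, 0. Qed.

Lemma im_congr_sym x y : im_congr x y -> im_congr y x.
Proof. by case=> a [a' e]; exists a', a. Qed.

Lemma im_congr_trans x y z : im_congr x y -> im_congr y z -> im_congr x z.
Proof.
case=> a [a' exy] [b [b' eyz]]; exists (a + b), (b' + a').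
by rewrite !linearD addrA exy addrAC eyz -addrA.
Qed.

Lemma im_congrD x x' y y' :
  im_congr x x' -> im_congr y y' -> im_congr (x + y) (x' + y').
Proof.
case=> a [a' ex] [b [b' ey]]; exists (a + b), (a' + b').
by rewrite !linearD addrACA ex ey addrACA.
Qed.

Lemma im_congrZ c x y : im_congr x y -> im_congr (c *: x) (c *: y).
Proof.
by case=> a [a' e]; exists (c *: a), (c *: a'); rewrite !linearZ -!scalerDr e.
Qed.

Definition im_congrb : rel X := fun x y => `[< im_congr x y >].

Lemma im_congrb_refl : reflexive im_congrb.
Proof. by move=> x; apply/asboolP/im_congr_refl. Qed.

Lemma im_congrb_sym : symmetric im_congrb.
Proof. by move=> x y; apply/asboolP/asboolP => /im_congr_sym. Qed.

Lemma im_congrb_trans : transitive im_congrb.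
Proof.
by move=> y x z /asboolP exy /asboolP eyz; apply/asboolP/(im_congr_trans exy).
Qed.

Canonical im_congr_equiv :=
  EquivRel im_congrb im_congrb_refl im_congrb_sym im_congrb_trans.

Definition quot_im := {eq_quot im_congrb}.
HB.instance Definition _ := Choice.on quot_im.

Lemma quot_imP x y : \pi_quot_im x = \pi y <-> im_congr x y.
Proof. by split=> [/eqquotP /asboolP | /asboolP e]; last apply/eqquotP. Qed.

Lemma repr_im_congr x : im_congr (repr (\pi_quot_im x)) x.
Proof. by apply/quot_imP; rewrite reprK. Qed.

Definition quot_add := lift_op2 quot_im +%R.
Definition quot_scale a := lift_op1 quot_im ( *:%R a).

Lemma pi_add x y : \pi_quot_im (x + y) = quot_add (\pi x) (\pi y).
Proof.
unlock quot_add; apply/quot_imP/im_congr_sym.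
by apply: im_congrD; apply: repr_im_congr.
Qed.

Lemma pi_scale a x : \pi_quot_im (a *: x) = quot_scale a (\pi x).
Proof.
rewrite /quot_scale -lock.
by apply/quot_imP/im_congr_sym/im_congrZ/repr_im_congr.
Qed.

Lemma quot_addA : associative quot_add.
Proof.
move=> u v w; elim/quotW: u => x; elim/quotW: v => y; elim/quotW: w => z.
by rewrite -!pi_add addrA.
Qed.

Lemma quot_addC : commutative quot_add.
Proof.
by move=> u v; elim/quotW: u => x; elim/quotW: v => y; rewrite -!pi_add addrC.
Qed.

Lemma quot_add0 : left_id (\pi_quot_im 0) quot_add.
Proof. by move=> u; elim/quotW: u => x; rewrite -pi_add add0r. Qed.

HB.instance Definition _ :=
  GRing.isNmodule.Build quot_im quot_addA quot_addC quot_add0.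

Lemma quot_scaleA a b u : quot_scale a (quot_scale b u) = quot_scale (a * b) u.
Proof. by elim/quotW: u => x; rewrite -!pi_scale scalerA. Qed.

Lemma quot_scale0 u : quot_scale 0 u = 0.
Proof. by elim/quotW: u => x; rewrite -pi_scale scale0r. Qed.

Lemma quot_scale1 : left_id 1 quot_scale.
Proof. by move=> u; elim/quotW: u => x; rewrite -pi_scale scale1r. Qed.

Lemma quot_scaleDr : right_distributive quot_scale +%R.
Proof.
move=> a u v; elim/quotW: u => x; elim/quotW: v => y.
by rewrite /GRing.add /= -!pi_add -!pi_scale -pi_add scalerDr.
Qed.

Lemma quot_scaleDl u : {morph quot_scale^~ u : a b / a + b}.
Proof.
by elim/quotW: u => x a b; rewrite /GRing.add /= -!pi_scale -pi_add scalerDl.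
Qed.

HB.instance Definition _ := GRing.Nmodule_isLSemiModule.Build S quot_im
  quot_scaleA quot_scale0 quot_scale1 quot_scaleDr quot_scaleDl.

Definition quot_proj (x : X) : quot_im := \pi_quot_im x.

Lemma quot_proj_is_semilinear : semilinear_for *:%R quot_proj.
Proof. by split=> [a x | x y]; rewrite /quot_proj ?pi_scale ?pi_add. Qed.

HB.instance Definition _ := GRing.isSemilinear.Build S X quot_im *:%R
  quot_proj quot_proj_is_semilinear.

Lemma quot_proj_ses :
    injective F -> (forall x a a', x + F a = F a' -> exists a0, F a0 = x) ->
  ses_semimod F quot_proj.
Proof.
move=> F_inj F_subtr.
have ker_im x : quot_proj x = 0 <-> exists a, F a = x.
  rewrite -(linear0 quot_proj) quot_imP; split.
    by case=> a [a']; rewrite add0r; apply: F_subtr.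
  by case=> a <-; exists 0, a; rewrite linear0 addr0 add0r.
split=> //; split; first exact: ker_im.
split; first by elim/quotW=> x; exists x.
move=> x x' /quot_imP [a [a' e]]; exists (F a), (F a').
by split; [apply/ker_im; exists a | split; [apply/ker_im; exists a'|]].
Qed.

End ImageQuotient.

Section HomSequence.
Variables (S : nzSemiRingType) (P A B C : lSemiModType S).
Variables (f : {linear A -> B}) (g : {linear B -> C}).

Definition hom_surjective : Prop :=
  forall c : {linear P -> C},
  exists b : {linear P -> B}, forall p, g (b p) = c p.

Definition hom_k_normal : Prop :=
  forall b b' : {linear P -> B}, (forall p, g (b p) = g (b' p)) ->
  exists k k' : {linear P -> B},
    [/\ forall p, g (k p) = 0, forall p, g (k' p) = 0 &
        forall p, b p + k p = b' p + k' p].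

Hypothesis fg : ses_semimod f g.

Lemma ses_hom_ker (b : {linear P -> B}) :
  (forall p, g (b p) = 0) ->
  exists a : {linear P -> A}, forall p, f (a p) = b p.
Proof.
have [f_inj [ker_g _]] := fg.
by move=> gb; apply: linear_factor_inj => // p; apply/ker_g.
Qed.

Lemma ses_homP : ses_hom P f g <-> hom_surjective /\ hom_k_normal.
Proof.
have [f_inj [ker_g _]] := fg.
split=> [[_ [_ [surj kn]]] | [surj kn]].
  by split=> // b b' /kn [k [k' [gk [gk' e]]]]; exists k, k'.
split=> [a1 a2 e p | ]; first exact: f_inj.
split=> [b | ]; first split; first exact: ses_hom_ker.
  by case=> a fa p; apply/ker_g; exists (a p).
by split=> // b b' /kn [k [k' [gk gk' e]]]; exists k, k'.
Qed.

Lemma e_projective_hom : e_projective B P -> hom_surjective /\ hom_k_normal.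
Proof. by move=> projB; apply/ses_homP/projB. Qed.

End HomSequence.

Lemma hom_surjective_of_comp (S : nzSemiRingType) (P L M C : lSemiModType S)
    (pi : {linear L -> M}) (g : {linear M -> C}) :
  hom_surjective P (g \o pi) -> hom_surjective P g.
Proof. by move=> h_surj c; have [b gb] := h_surj c; exists (pi \o b). Qed.

Lemma hom_k_normal_of_comp (S : nzSemiRingType) (P L M C : lSemiModType S)
    (pi : {linear L -> M}) (g : {linear M -> C}) :
  hom_surjective P pi -> hom_k_normal P (g \o pi) -> hom_k_normal P g.
Proof.
move=> pi_surj h_kn m m' gm.
have [[l pil] [l' pil']] := (pi_surj m, pi_surj m').
have /h_kn [k [k' [hk hk' e]]] : forall p, (g \o pi) (l p) = (g \o pi) (l' p).
  by move=> p; rewrite /= pil pil' gm.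
exists (pi \o k), (pi \o k'); split=> // p.
by rewrite /= -pil -pil' -!linearD e.
Qed.

Section EProjectiveMiddle.
Variables (S : nzSemiRingType) (P K L M : lSemiModType S).
Variables (iota : {linear K -> L}) (pi : {linear L -> M}).
Hypotheses (KLM : ses_semimod iota pi) (projL : e_projective L P).

Lemma e_projective_quotient : e_projective M P.
Proof.
move=> A C f g fg; apply/(ses_homP P fg).
have [_ [_ [pi_onto pi_kn]]] := KLM.
have [_ [_ [g_onto g_kn]]] := fg.
have h_onto c : exists l, (g \o pi) l = c.
  by have [m <-] := g_onto c; have [l <-] := pi_onto m; exists l.
have h_kn : k_normal (g \o pi) := k_normal_comp pi_onto pi_kn g_kn.
have [h_surj h_kn'] := e_projective_hom (ker_incl_ses h_onto h_kn) projL.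
have [pi_surj _] := e_projective_hom KLM projL.
split; first exact: hom_surjective_of_comp h_surj.
exact: hom_k_normal_of_comp pi_surj h_kn'.
Qed.

Section SubHom.
Variables (A C : lSemiModType S) (f : {linear A -> K}) (g : {linear K -> C}).
Hypothesis fg : ses_semimod f g.

Local Notation F := (iota \o f).
Local Notation q := (quot_proj F).

Let iota_inj : injective iota := KLM.1.
Let ker_pi : forall l, pi l = 0 <-> exists k, iota k = l := KLM.2.1.
Let ker_g : forall k, g k = 0 <-> exists a, f a = k := fg.2.1.

Let gf0 a : g (f a) = 0.
Proof. by apply/ker_g; exists a. Qed.

Let piF0 a : pi (F a) = 0.
Proof. by apply/ker_pi; exists (f a). Qed.

Lemma im_comp_subtractive x a a' : x + F a = F a' -> exists a0, F a0 = x.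
Proof.
move=> e; have /ker_pi [k ik] : pi x = 0.
  by have := congr1 pi e; rewrite linearD !piF0 addr0.
have /iota_inj ekf : iota (k + f a) = iota (f a') by rewrite linearD ik.
have /ker_g [a0 fa0] : g k = 0.
  by have := congr1 g ekf; rewrite linearD !gf0 addr0.
by exists a0; rewrite /= fa0.
Qed.

Lemma quot_comp_ses : ses_semimod F q.
Proof.
apply: quot_proj_ses; last exact: im_comp_subtractive.
by move=> a a' /iota_inj; apply: fg.1.
Qed.

Lemma quot_proj_iotaP k k' : q (iota k) = q (iota k') <-> g k = g k'.
Proof.
split.
  case/quot_imP=> a [a' /=]; rewrite -!linearD => /iota_inj /(congr1 g).
  by rewrite !linearD !gf0 !addr0.
have [_ [_ [_ g_kn]]] := fg.
move/g_kn=> [u [u' [/ker_g [a fa] [/ker_g [a' fa'] e]]]].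
by apply/quot_imP; exists a, a'; rewrite /= fa fa' -!linearD e.
Qed.

Lemma quot_proj_pi x y : q x = q y -> pi x = pi y.
Proof.
by case/quot_imP=> a [a' /(congr1 pi)]; rewrite !linearD !piF0 !addr0.
Qed.

Lemma sub_hom_surjective : hom_surjective P g.
Proof.
have [_ [_ [g_onto _]]] := fg.
have [j jg] :
    exists j : {linear C -> quot_im F}, forall k, j (g k) = q (iota k).
  by apply: (linear_factor_surj (h := q \o iota)) => // k k' /quot_proj_iotaP.
have j_inj : injective j.
  move=> c c'; have [[k <-] [k' <-]] := (g_onto c, g_onto c').
  by rewrite !jg => /quot_proj_iotaP.
have [q_surj _] := e_projective_hom quot_comp_ses projL.
move=> c; have [b qb] := q_surj (j \o c).
have pib p : pi (b p) = 0.
  have [k gk] := g_onto (c p).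
  have -> : pi (b p) = pi (iota k) by apply: quot_proj_pi; rewrite qb /= -gk jg.
  by apply/ker_pi; exists k.
have [b' ib'] := ses_hom_ker KLM pib.
by exists b' => p; apply: j_inj; rewrite jg ib' qb.
Qed.

Lemma sub_hom_k_normal : hom_k_normal P g.
Proof.
have [_ q_kn] := e_projective_hom quot_comp_ses projL.
move=> b b' gb.
have /q_kn [k [k' [qk qk' e]]] :
    forall p, q ((iota \o b) p) = q ((iota \o b') p).
  by move=> p; apply/quot_proj_iotaP.
have [a fa] := ses_hom_ker quot_comp_ses qk.
have [a' fa'] := ses_hom_ker quot_comp_ses qk'.
exists (f \o a), (f \o a'); split=> p; rewrite /= ?gf0 //.
by apply: iota_inj; rewrite !linearD; have := e p; rewrite /= -fa -fa'.
Qed.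

End SubHom.

Lemma e_projective_sub : e_projective K P.
Proof.
move=> A C f g fg; apply/(ses_homP P fg).
by split; [exact: sub_hom_surjective fg | exact: sub_hom_k_normal fg].
Qed.

End EProjectiveMiddle.

Theorem mainTheorem12 (S : nzSemiRingType) (P K L M : lSemiModType S)
  (iota : {linear K -> L}) (pi : {linear L -> M}) :
  ses_semimod iota pi -> e_projective L P ->
  e_projective K P /\ e_projective M P.
Proof.
move=> KLM projL; split.
  exact: e_projective_sub KLM projL.
exact: e_projective_quotient KLM projL.
Qed.
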